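(* Let $M,N$ be equivalent canonical dtlas such that $M$ is a dtpla and $N$ is a dtop, and let $\varphi$ be the aheadness mapping from $N$ to $M$. Then (1) $A_N\Phi=\sqcap\{A_M(p)\Omega\mid p\in P_M\}$, and (2) for every $v\in\mathbb N_+^*$, $q\in Q_N$ and $p\in P_M$: if $A_N/v=q(x_0)$ then $\varphi(q,p)=A_M(p)\Omega/v$.
   Context: Trees and patterns. $T_\Delta(Z)$ is the set of trees over ranked alphabet $\Delta$ with extra nullary symbols $Z$; $t/v$ is the subtree at node $v\in\mathbb N_+^*$; $\bot$ is a special nullary symbol. $\sqcap T$ is the greatest lower bound of a finite nonempty set $T$ of trees w.r.t. the order $t\sqsubseteq t'$ ($t'$ obtained from $t$ by replacing occurrences of $\bot$ by trees): the largest common prefix with $\bot$ at the highest nodes of disagreement. A $\Sigma$-context is $C\in T_\Sigma(\{\bot\})$ with exactly one $\bot$; $\mathcal C_\Sigma$ is their set. $Q(Y)=\{q(y)\mid q\in Q,y\in Y\}$, $X=\{x_0,x_1,\dots\}$, $X_k=\{x_1,\dots,x_k\}$. Dtlas. A dtla $M$ from $\Sigma$ to $\Delta$ consists of a finite set $Q_M$ of states, a total deterministic bottom-up tree automaton with finite state set $P_M$ and transitions $\delta(a,p_1,\dots,p_k)$, extended to $\delta_M:T_\Sigma\to P_M$ ($[\![p]\!]_M=\delta_M^{-1}(p)$), axioms $A_M(p)\in T_\Delta(Q_M(\{x_0\}))$, and at most one rule $q(a(x_1\langle p_1\rangle,\dots,x_k\langle p_k\rangle))\to\mathrm{rhs}_M(q,a,p_1,\dots,p_k)\in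 T_\Delta(Q_M(X_k))$ per $q,a,p_1,\dots,p_k$. Semantics: $q_M(a(s_1,\dots,s_k))=\mathrm{rhs}_M(q,a,\delta_M(s_1),\dots,\delta_M(s_k))[q'(x_i)\leftarrow q'_M(s_i)]$, $M(s)=A_M(\delta_M(s))[q(x_0)\leftarrow q_M(s)]$; equivalent means equal translations. A dtop is a dtla with a single look-ahead state $\bot$; for a dtop $N$ its unique axiom is $A_N\in T_\Delta(Q_N(\{x_0\}))$. A dtpla has $|P_M|\ge2$. $M(C[p])\in T_\Delta(Q_M\times P_M)$ is the output on $C\in\mathcal C_\Sigma$ with the hole treated as a leaf of look-ahead state $p$ and $q_M(p)=\langle q,p\rangle$; $N(C)=N(C[\bot])$. A state $q$ is reachable if $\langle q,p\rangle$ labels a node of $M(C[p])$ for some $C,p$. $M$ is la-uniform if there is $\rho_M:Q_M\to P_M$ with domain of $[\![q]\!]_M$ equal to $[\![\rho_M(q)]\!]_M$, every $q(x_0)$ in $A_M(p)$ having $\rho_M(q)=p$, every $q'(x_i)$ in $\mathrm{rhs}_M(q,a,p_1,\dots,p_k)$ having $\rho_M(q')=p_i$, and the rule for $q,a,p_1,\dots,p_k$ existing iff $\delta(a,p_1,\dots,p_k)=\rho_M(q)$ (for a dtop, $\rho(q)=\bot$). Earliest: no state $q$ and $d\in\Delta$ such that $q(s)$ has root label $d$ for all $s$ in the domain of $[\![q]\!]$. Canonical: total, la-uniform, earliest, all states reachable, distinct states have distinct translations. For $t\in T_\Delta(Q(X))$ of an la-uniform dtla, $t\Omega$ replaces every $q(x_i)$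 by the leaf $\langle q,\rho(q)\rangle$ (for a dtop, by $\langle q,\bot\rangle$). For $t\in T_\Delta(Q_N(X))$, $t\Phi$ replaces every $q(x_i)$ by $\bot$. Aheadness mapping: the unique $\varphi:Q_N\times P_M\to T_\Delta(Q_M\times P_M)$ with $M(C[p])=N(C)[\langle q,\bot\rangle\leftarrow\varphi(q,p)\mid q\in Q_N]$ for all $C\in\mathcal C_\Sigma$, $p\in P_M$. *)

From HB Require Import structures.
From mathcomp Require Import all_boot.
From Stdlib Require List.

Set Implicit Arguments.
Unset Strict Implicit.
Unset Printing Implicit Defensive.

(* A tree over a ranked alphabet D with extra nullary symbols Z,       *)
(* i.e. an element of T_D(Z), is an [otree (D + Z)] that is well-ranked *)
(* for the rank function [rkX rk] (inr-symbols are nullary).            *)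
Inductive otree (L : Type) : Type := Nd : L -> seq (otree L) -> otree L.
Arguments Nd {L} _ _.

Definition leaf {L : Type} (l : L) : otree L := Nd l [::].

Definition rkX {D Z : Type} (rk : D -> nat) (x : D + Z) : nat :=
  match x with inl d => rk d | inr _ => 0 end.

Fixpoint wr {L : Type} (rk : L -> nat) (t : otree L) : bool :=
  match t with Nd l ts => (size ts == rk l) && all (wr rk) ts end.

Fixpoint vars {D Z : Type} (t : otree (D + Z)) : seq Z :=
  match t with
  | Nd (inr z) _ => [:: z]
  | Nd (inl _) ts => flatten (map vars ts)
  end.

Fixpoint oall {X : Type} (l : seq (option X)) : option (seq X) :=
  match l with
  | [::] => Some [::]
  | None :: _ => None
  | Some x :: l' => match oall l' with Some xs => Some (x :: xs) | None => None end
  end.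

Fixpoint tsubo {D Z W : Type} (g : Z -> option (otree (D + W)))
    (t : otree (D + Z)) : option (otree (D + W)) :=
  match t with
  | Nd (inr z) _ => g z
  | Nd (inl d) ts => option_map (Nd (inl d)) (oall (map (tsubo g) ts))
  end.

Fixpoint tsub {D Z W : Type} (g : Z -> otree (D + W))
    (t : otree (D + Z)) : otree (D + W) :=
  match t with
  | Nd (inr z) _ => g z
  | Nd (inl d) ts => Nd (inl d) (map (tsub g) ts)
  end.

(* subtree t/v at node v in N_+^* (None if v is not a node of t) *)
Fixpoint subt {L : Type} (t : otree L) (v : seq nat) : option (otree L) :=
  match v with
  | [::] => Some t
  | i :: v' =>
      match t with
      | Nd _ ts =>
          if i is 0 then None else
          match onth ts i.-1 with Some t' => subt t' v' | None => None end
      end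
  end.

(* Order on T_D(Z ∪ {⊥}) (⊥ = inr None): t ⊑ t' iff t' is obtained from t
   by replacing occurrences of ⊥ by trees. *)
Fixpoint tle {D Z : Type} (t t' : otree (D + option Z)) : Prop :=
  match t with
  | Nd (inr None) [::] => True
  | Nd l ts =>
      match t' with
      | Nd l' ts' =>
          l = l' /\
          (fix go (us us' : seq (otree (D + option Z))) : Prop :=
             match us, us' with
             | [::], [::] => True
             | u :: us0, u' :: us0' => tle u u' /\ go us0 us0'
             | _, _ => False
             end) ts ts'
      end
  end.

Definition is_glb {D Z : Type} (S : otree (D + option Z) -> Prop)
    (g : otree (D + option Z)) : Prop :=
  (forall t, S t -> tle g t) /\
  (forall l, (forall t, S t -> tle l t) -> tle l g).

(* Deterministic top-down tree transducers with regular look-ahead.    *)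
Section Dtla.
Variables (Sig Del : finType) (rkS : Sig -> nat) (rkD : Del -> nat).

(* Input trees: otree (Sig + Y); the inr-leaves are "holes".
   T_Sig = trees with Y = void; Sigma-contexts: Y = unit, exactly one hole. *)
Record dtla : Type := Dtla {
  Qs : finType;
  Ps : finType;
  delta : Sig -> seq Ps -> Ps;                    (* total bottom-up automaton *)
  axm : Ps -> otree (Del + Qs);                   (* A_M(p); leaf inr q = q(x0) *)
  rhs : Qs -> Sig -> seq Ps -> option (otree (Del + (Qs * nat)))
        (* rhs_M(q,a,p1..pk); leaf inr (q',i) = q'(x_i); None = no rule *)
}.
Arguments delta : clear implicits.
Arguments axm : clear implicits.
Arguments rhs : clear implicits.

Variable M : dtla.

Definition wf_dtla : Prop :=
  (forall p, wr (rkX rkD) (axm M p)) /\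
  (forall q a ps r, size ps = rkS a -> rhs M q a ps = Some r ->
     wr (rkX rkD) r /\ (forall q' i, List.In (q', i) (vars r) -> 0 < i <= rkS a)).

Section Run.
Variables (Y W : Type) (h : Y -> Ps M) (hout : Qs M -> Y -> otree (Del + W)).

Fixpoint dst (s : otree (Sig + Y)) : Ps M :=
  match s with
  | Nd (inl a) ss => delta M a (map dst ss)
  | Nd (inr y) _ => h y
  end.

(* q_M(s) (partial); on a hole y, q_M(y) = hout q y *)
Fixpoint qsem (s : otree (Sig + Y)) : Qs M -> option (otree (Del + W)) :=
  match s with
  | Nd (inr y) _ => fun q => Some (hout q y)
  | Nd (inl a) ss =>
      let fs := map qsem ss in
      let ps := map dst ss in
      fun q =>
        match rhs M q a ps with
        | None => None
        | Some r =>
            tsubo (fun qi : Qs M * nat =>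
                     match onth fs qi.2.-1 with
                     | Some f => f qi.1
                     | None => None
                     end) r
        end
  end.

Definition msem (s : otree (Sig + Y)) : option (otree (Del + W)) :=
  tsubo (fun q => qsem s q) (axm M (dst s)).
End Run.

Definition Tin := otree (Sig + void).
Definition wrIn (s : Tin) : bool := wr (rkX rkS) s.
Definition vh (y : void) : Ps M := match y with end.
Definition vo (q : Qs M) (y : void) : otree (Del + void) := match y with end.
Definition dst0 (s : Tin) : Ps M := dst vh s.
Definition qsem0 (s : Tin) (q : Qs M) : option (otree (Del + void)) := qsem vh vo s q.
Definition msem0 (s : Tin) : option (otree (Del + void)) := msem vh vo s.

(* Sigma-contexts: trees in T_Sig({⊥}) with exactly one ⊥ (= inr tt) *)
Definition is_context (C : otree (Sig + unit)) : Prop :=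
  wr (rkX rkS) C /\ size (vars C) = 1.

(* M(C[p]) in T_Del(Q_M x P_M), with q_M(p) = <q,p> *)
Definition msemC (C : otree (Sig + unit)) (p : Ps M) :
    option (otree (Del + (Qs M * Ps M))) :=
  msem (fun _ : unit => p) (fun q (_ : unit) => leaf (inr (q, p))) C.

Definition total : Prop := forall s, wrIn s -> msem0 s <> None.

Definition la_uniform (rho : Qs M -> Ps M) : Prop :=
  (forall q s, wrIn s -> (qsem0 s q <> None <-> dst0 s = rho q)) /\
  (forall p q, List.In q (vars (axm M p)) -> rho q = p) /\
  (forall q a ps r, size ps = rkS a -> rhs M q a ps = Some r ->
     forall q' i, List.In (q', i) (vars r) -> onth ps i.-1 = Some (rho q')) /\
  (forall q a ps, size ps = rkS a ->
     (rhs M q a ps <> None <-> delta M a ps = rho q)).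

Definition earliest : Prop :=
  ~ exists (q : Qs M) (d : Del),
      forall s, wrIn s -> qsem0 s q <> None ->
        exists ts, qsem0 s q = Some (Nd (inl d) ts).

Definition reachable (q : Qs M) : Prop :=
  exists C p t, is_context C /\ msemC C p = Some t /\ List.In (q, p) (vars t).

Definition distinct_translations : Prop :=
  forall q q' : Qs M, q <> q' ->
    ~ (forall s, wrIn s -> qsem0 s q = qsem0 s q').

Definition canonical (rho : Qs M -> Ps M) : Prop :=
  total /\ la_uniform rho /\ earliest /\ (forall q, reachable q) /\
  distinct_translations.

Definition is_dtop : Prop := #|Ps M| = 1.
Definition is_dtpla : Prop := 2 <= #|Ps M|.

Definition Omega (rho : Qs M -> Ps M) (t : otree (Del + Qs M)) :
    otree (Del + (Qs M * Ps M)) :=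
  tsub (fun q => leaf (inr (q, rho q))) t.

End Dtla.

Arguments Qs {Sig Del}.
Arguments canonical {Sig Del} rkS M rho.
Arguments la_uniform {Sig Del} rkS M rho.
Arguments qsem0 {Sig Del} M s q.
Arguments msemC {Sig Del} M C p.
Arguments msem0 {Sig Del} M s.
Arguments axm {Sig Del} d _.
Arguments Omega {Sig Del} M rho t.
Arguments Ps {Sig Del}.

Definition equivalent {Sig Del : finType} (rkS : Sig -> nat) (M N : dtla Sig Del) : Prop :=
  forall s : Tin Sig, wrIn rkS s -> msem0 M s = msem0 N s.

Definition Phi {Del Q Z : Type} (t : otree (Del + Q)) : otree (Del + option Z) :=
  tsub (fun _ => leaf (inr None)) t.

Definition embB {Del Z : Type} (t : otree (Del + Z)) : otree (Del + option Z) :=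
  tsub (fun z => leaf (inr (Some z))) t.

(* phi is the aheadness mapping from the dtop N to M:
   M(C[p]) = N(C)[<q,⊥> <- phi(q,p)] for all contexts C and p in P_M
   (bot is the unique look-ahead state of N). *)
Definition is_aheadness {Sig Del : finType} (rkS : Sig -> nat)
    (M N : dtla Sig Del) (bot : Ps N)
    (phi : Qs N -> Ps M -> otree (Del + (Qs M * Ps M))) : Prop :=
  forall C p, is_context rkS C ->
    msemC M C p = option_map (tsub (fun qb : Qs N * Ps N => phi qb.1 p)) (msemC N C bot).
Arguments is_aheadness {Sig Del} rkS M N bot phi.

From Pilot Require Import Defs.
From HB Require Import structures.
From mathcomp Require Import all_boot.
From Stdlib Require List.

Set Implicit Arguments.
Unset Strict Implicit.
Unset Printing Implicit Defensive.

(* Everything follows from one identity, obtained by applying the aheadness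
   property to the trivial context (a single hole):
       A_M(p) Omega = A_N[q(x0) <- phi(q,p)]                  (axiom_Omega).
   Part (2) is then a statement about substitution: the subtree at the
   position of a variable leaf is the tree substituted there (subt_tsub).
   For part (1), A_N Phi is below every instance A_N[q <- phi(q,p)]
   (tle_Phi_embB), and it is the greatest such lower bound as soon as, for
   each q of A_N, the trees phi(q,p) do not all share their root label
   (Phi_greatest).  That last condition holds because a common output
   symbol would contradict earliness of N (phi_not_output_rooted), and a
   common leaf <q',p'> would force p' = p for all of the at least two
   look-ahead states p of M (phi_label_varies). *)

(* Structural induction on trees, with an induction hypothesis for every
   child (the automatically generated principle for otree has none). *)
Section TreeInduction.
Variables (L : Type) (P : otree L -> Prop).
Hypothesis IH : forall l ts, (forall t, List.In t ts -> P t) -> P (Nd l ts).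

Fixpoint otree_ind2 (t : otree L) : P t :=
  match t with
  | Nd l ts => IH l
      ((fix all_children (us : seq (otree L)) : forall u, List.In u us -> P u :=
          match us with
          | [::] => fun u (h : List.In u [::]) => False_ind _ h
          | u0 :: us' => fun u h =>
              match h with
              | or_introl e => eq_ind u0 P (otree_ind2 u0) u e
              | or_intror h' => all_children us' u h'
              end
          end) ts)
  end.
End TreeInduction.

Lemma map_ext_In (A B : Type) (f g : A -> B) (s : seq A) :
  (forall x, List.In x s -> f x = g x) -> map f s = map g s.
Proof.
elim: s => //= a s IHs fg; rewrite fg; last by left.
by rewrite IHs // => x xs; apply: fg; right.
Qed.

(* Membership in concatenations and flattenings (List.In, since trees have
   no decidable equality in general). *)
Lemma In_cat (A : Type) (x : A) (s1 s2 : seq A) :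
  List.In x (s1 ++ s2) <-> List.In x s1 \/ List.In x s2.
Proof.
elim: s1 => [|a s1 IHs] /=; first by split; [right | case].
rewrite IHs; tauto.
Qed.

Lemma In_flatten_map (A B : Type) (f : A -> seq B) (s : seq A) (y : B) :
  List.In y (flatten (map f s)) <-> exists2 x, List.In x s & List.In y (f x).
Proof.
elim: s => [|a s IHs] /=; first by split=> // [[]].
rewrite In_cat IHs; split.
- by case=> [ya | [x xs yx]]; [exists a; first left | exists x; first right].
- by case=> x [<- | xs] yx; [left | right; exists x].
Qed.

Lemma oall_map_agree (A B : Type) (f g : A -> option B) (ts : seq A) rs :
  oall (map f ts) = Some rs -> oall (map g ts) = Some rs ->
  forall t, List.In t ts -> exists r, f t = Some r /\ g t = Some r.
Proof.
elim: ts rs => //= t ts IHts rs.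
case ef: (f t) => [a|] //; case E1: (oall (map f ts)) => [rs1|] // [<-].
case eg: (g t) => [b|] //; case E2: (oall (map g ts)) => [rs2|] // [eab ers] u.
subst b rs2; case=> [<- | uts]; first by exists a.
exact: IHts E1 E2 u uts.
Qed.

Section Substitution.
Variables (D Z W : Type).

Lemma tsubo_Some (g : Z -> otree (D + W)) (t : otree (D + Z)) :
  tsubo (fun z => Some (g z)) t = Some (tsub g t).
Proof.
elim/otree_ind2: t => [[d|z] ts IHt] //=.
suff -> : oall (map (tsubo (fun z => Some (g z))) ts) = Some (map (tsub g) ts) by [].
elim: ts IHt => //= u us IHus IHt; rewrite IHt; last by left.
by rewrite IHus // => x xs; apply: IHt; right.
Qed.

Lemma tsub_ext (f g : Z -> otree (D + W)) (t : otree (D + Z)) :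
  (forall z, List.In z (vars t) -> f z = g z) -> tsub f t = tsub g t.
Proof.
elim/otree_ind2: t => [[d|z] ts IHt] fg /=; last by apply: fg; left.
congr Nd; apply: map_ext_In => u uts; apply: IHt => // z zu.
by apply: fg; apply/In_flatten_map; exists u.
Qed.

Lemma In_vars_tsub (f : Z -> otree (D + W)) (t : otree (D + Z)) (z : Z) (w : W) :
  List.In z (vars t) -> List.In w (vars (f z)) -> List.In w (vars (tsub f t)).
Proof.
elim/otree_ind2: t => [[d|z'] ts IHt] /=; last by case=> [<- | []].
move=> /In_flatten_map [u uts zu] wz; apply/In_flatten_map.
by exists (tsub f u); [apply: List.in_map | apply: IHt zu wz].
Qed.

Lemma In_vars_relabel (h : Z -> W) (t : otree (D + Z)) (w : W) :
  List.In w (vars (tsub (fun z => @leaf (D + W) (inr (h z))) t)) ->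
  exists2 z, List.In z (vars t) & w = h z.
Proof.
elim/otree_ind2: t => [[d|z] ts IHt] /=; last by case=> [<- | []]; exists z => //; left.
move=> /In_flatten_map [_ /List.in_map_iff [u [<- uts]] wu].
by case: (IHt u uts wu) => z zu ->; exists z => //; apply/In_flatten_map; exists u.
Qed.

Lemma tsubo_agree (g1 g2 : Z -> option (otree (D + W))) (t : otree (D + Z)) r :
  tsubo g1 t = Some r -> tsubo g2 t = Some r ->
  forall z, List.In z (vars t) -> g1 z = g2 z.
Proof.
elim/otree_ind2: t r => [[d|z'] ts IHt] r /=; last first.
  by move=> h1 h2 z [<- | []]; rewrite h1 h2.
case E1: (oall _) => [rs|] // [<-]; case E2: (oall _) => [rs'|] // [ers] z.
subst rs'; case/In_flatten_map => u uts zu.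
have [r' [e1 e2]] := oall_map_agree E1 E2 uts.
exact: IHt e1 e2 z zu.
Qed.
End Substitution.

Lemma tsub_tsub (D Z W V : Type) (g : W -> otree (D + V)) (f : Z -> otree (D + W)) t :
  tsub g (tsub f t) = tsub (fun z => tsub g (f z)) t.
Proof.
elim/otree_ind2: t => [[d|z] ts IHt] //=; rewrite -map_comp.
by congr Nd; apply: map_ext_In.
Qed.

Lemma tsubo_tsub (D Z W V : Type) (g : W -> option (otree (D + V)))
    (f : Z -> otree (D + W)) t :
  tsubo g (tsub f t) = tsubo (fun z => tsubo g (f z)) t.
Proof.
elim/otree_ind2: t => [[d|z] ts IHt] //=; rewrite -map_comp.
by rewrite (map_ext_In (g := tsubo (fun z => tsubo g (f z))) IHt).
Qed.

(* Substituting F at the variables of t turns a variable leaf q at node v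
   into F q at the same node (variable nodes of a well-ranked tree are leaves). *)
Lemma subt_tsub (D Z W : Type) (rk : D -> nat) (F : Z -> otree (D + W))
    (t : otree (D + Z)) (v : seq nat) (q : Z) :
  wr (rkX rk) t -> subt t v = Some (leaf (inr q)) -> subt (tsub F t) v = Some (F q).
Proof.
elim: v t => [|i v IHv] [[d|z] ts] /=; first by [].
- by move=> _ [->].
- case/andP=> _ wr_ts; case: i => // i; rewrite onth_map.
  case E: (onth ts i) => [t'|] //=; apply: IHv.
  have i_lt : i < size ts by rewrite -onthTE E.
  by move/all_nthP: wr_ts => /(_ t' i i_lt); rewrite (@onth_nth _ t' t' ts i E).
- by case/andP=> /eqP/size0nil -> _; case: i => [|i]; rewrite /= ?onth0n.
Qed.

Definition top_label {L : Type} (t : otree L) : L := let: Nd l _ := t in l.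

Definition label_varies {P L : Type} (f : P -> otree L) : Prop :=
  forall lab, ~ (forall p, top_label (f p) = lab).

Section Prefix.
Variables (D Z : Type).
Local Notation btree := (otree (D + option Z)).
Local Notation bot := (@leaf (D + option Z) (inr None)).

Lemma bot_or_not (t : btree) : t = bot \/ t <> bot.
Proof. by case: t => [[d|[z|]] [|u us]]; (left + right). Qed.

Lemma tle_node (lab : D + option Z) ls (t' : btree) :
  Nd lab ls <> bot ->
  tle (Nd lab ls) t' <-> lab = top_label t' /\ List.Forall2 tle ls (let: Nd _ ts' := t' in ts').
Proof.
case: t' => l' ts' not_bot.
have -> : tle (Nd lab ls) (Nd l' ts') = (lab = l' /\
   (fix go (us us' : seq btree) : Prop :=
      match us, us' with
      | [::], [::] => True
      | u :: us0, u' :: us0' => tle u u' /\ go us0 us0'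
      | _, _ => False
      end) ls ts').
  by case: lab not_bot => [d|[z|]] //; case: ls.
clear not_bot; apply: and_iff_compat_l; split.
- by elim: ls ts' => [|u us IHus] [|u' us'] //= [uu' /IHus]; constructor.
- by elim=> //= u u' us us' uu' _ ->.
Qed.

Lemma tle_Phi_embB (Q : Type) (f : Q -> otree (D + Z)) (t : otree (D + Q)) :
  tle (Phi t : btree) (embB (tsub f t)).
Proof.
elim/otree_ind2: t => [[d|q] ts IHt] //.
apply: (proj2 (tle_node _ _)) => //; split => //=; rewrite -map_comp.
elim: ts IHt => //= u us IHus IHt; constructor; first by apply: IHt; left.
by apply: IHus => x xs; apply: IHt; right.
Qed.

Lemma Forall2_glb (C P : Type) (p0 : P) (G : P -> C -> btree) (H : C -> btree)
    (ls : seq btree) (cs : seq C) :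
  (forall c, List.In c cs -> forall l, (forall p, tle l (G p c)) -> tle l (H c)) ->
  (forall p, List.Forall2 tle ls (map (G p) cs)) -> List.Forall2 tle ls (map H cs).
Proof.
elim: cs ls => [|c cs IHcs] ls glbH lsG.
  by have := lsG p0; inversion 1; constructor.
have := lsG p0; inversion 1 as [|l ? ls' ? _ _ els]; subst.
have lsG' p : tle l (G p c) /\ List.Forall2 tle ls' (map (G p) cs).
  by have := lsG p; inversion 1.
constructor.
- by apply: glbH; [left | move=> p; case: (lsG' p)].
- by apply: IHcs => [c' cs' | p]; [apply: glbH; right | case: (lsG' p)].
Qed.

Lemma Phi_greatest (Q P : Type) (p0 : P) (F : Q -> P -> otree (D + Z))
    (t : otree (D + Q)) :
  (forall q, List.In q (vars t) -> label_varies (fun p => embB (F q p))) ->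
  forall l, (forall p, tle l (embB (tsub (F^~ p) t))) -> tle l (Phi t : btree).
Proof.
elim/otree_ind2: t => [[d|q] ts IHt] varies [lab ls] lowb;
  have [-> //|not_bot] := bot_or_not (Nd lab ls).
- have lowb' p := proj1 (tle_node (embB (tsub (F^~ p) (Nd (inl d) ts))) not_bot) (lowb p).
  apply: (proj2 (tle_node _ _)) => //; split; first exact: (lowb' p0).1.
  change (List.Forall2 tle ls (map Phi ts)).
  apply: (@Forall2_glb _ P p0 (fun p u => embB (tsub (F^~ p) u))) => [u uts l ul | p].
  + apply: (IHt u uts) ul => q qu; apply: varies.
    by apply/(In_flatten_map vars); exists u.
  + by rewrite map_comp; case: (lowb' p); rewrite /= -map_comp.
- case: (varies q (or_introl erefl) lab) => p.
  by case: (proj1 (tle_node _ not_bot) (lowb p)).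
Qed.
End Prefix.

Lemma dtop_state_unique (Sig Del : finType) (N : dtla Sig Del) (bot x : Ps N) :
  is_dtop N -> x = bot.
Proof.
case/mem_card1=> x0 hx0.
by have := hx0 x; have := hx0 bot; rewrite !inE => /esym/eqP -> /esym/eqP ->.
Qed.

Section Aheadness.
Variables (Sig Del : finType) (rkS : Sig -> nat) (M N : dtla Sig Del).
Variables (rhoM : Qs M -> Ps M) (bot : Ps N).
Variable phi : Qs N -> Ps M -> otree (Del + (Qs M * Ps M)).
Hypothesis luM : la_uniform rkS M rhoM.
Hypothesis aheadness : is_aheadness rkS M N bot phi.

(* Aheadness on the trivial context: A_M(p) Omega = A_N[q <- phi(q,p)]. *)
Lemma axiom_Omega (p : Ps M) :
  Omega M rhoM (axm M p) = tsub (phi^~ p) (axm N bot).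
Proof.
have hole : is_context rkS (Nd (inr tt) [::]) by [].
have := aheadness p hole.
rewrite /msemC /msem /= (tsubo_Some (fun q => leaf (inr (q, p)))).
rewrite (tsubo_Some (fun q => leaf (inr (q, bot)))) /= => -[].
rewrite tsub_tsub /= => <-.
by apply: tsub_ext => q q_ax; rewrite (luM.2.1 p q q_ax).
Qed.

Lemma phi_leaf_state (q : Qs N) (p : Ps M) (z : Qs M * Ps M) :
  List.In q (vars (axm N bot)) -> List.In z (vars (phi q p)) -> z.2 = p.
Proof.
move=> q_ax z_phi; have := In_vars_tsub (f := phi^~ p) q_ax z_phi; rewrite -axiom_Omega.
by case/(In_vars_relabel (h := fun q' => (q', rhoM q'))) => q' q'_ax ->; apply: luM.2.1.
Qed.

(* Defs.total is qualified because ssrbool also defines a [total]. *)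
Hypothesis totN : Defs.total rkS N.
Hypothesis dtopN : is_dtop N.
Hypothesis eqMN : equivalent rkS M N.

Lemma state_translation_via_phi (s : Tin Sig) (q : Qs N) :
  wrIn rkS s -> List.In q (vars (axm N bot)) ->
  qsem0 N s q = tsubo (fun z => qsem0 M s z.1) (phi q (dst0 M s)).
Proof.
move=> wr_s q_ax.
have outM : msem0 M s =
    tsubo (fun q => tsubo (fun z => qsem0 M s z.1) (phi q (dst0 M s))) (axm N bot).
  by rewrite -tsubo_tsub -axiom_Omega /Omega tsubo_tsub.
have outN : msem0 N s = tsubo (qsem0 N s) (axm N bot).
  by rewrite /msem0 /msem -/(dst0 N s) (dtop_state_unique bot (dst0 N s) dtopN).
have := totN wr_s; case E: (msem0 N s) => [r|] // _.
have runN : tsubo (qsem0 N s) (axm N bot) = Some r by rewrite -outN.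
have runM := etrans (esym outM) (etrans (eqMN wr_s) E).
exact: tsubo_agree runN runM q q_ax.
Qed.

Hypothesis earlyN : earliest rkS N.
Hypothesis dtplaM : is_dtpla M.

(* Since N is earliest, the phi(q,.) cannot all start with the same output
   symbol: that symbol would be output by q_N on every input. *)
Lemma phi_not_output_rooted (q : Qs N) (d : Del) :
  List.In q (vars (axm N bot)) -> ~ (forall p, top_label (phi q p) = inl d).
Proof.
move=> q_ax rooted; apply: earlyN; exists q, d => s wr_s.
rewrite (state_translation_via_phi wr_s q_ax).
case: (phi q (dst0 M s)) (rooted (dst0 M s)) => l us /= -> /=.
by case: (oall _) => // ts _; exists ts.
Qed.

(* Nor can they all be the same leaf <q',p'>: its look-ahead state p' would
   have to equal every p, but M has at least two look-ahead states. *)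
Lemma phi_label_varies (q : Qs N) :
  List.In q (vars (axm N bot)) -> label_varies (fun p => embB (phi q p)).
Proof.
move=> q_ax lab same; case/card_gt1P: dtplaM => p1 [p2 [_ _ p12]].
case E1: (phi q p1) (same p1) => [[d|z] us1] /= lab1.
- apply: (phi_not_output_rooted (d := d) q_ax) => p.
  by have := same p; rewrite -lab1; case: (phi q p) => [[d'|z'] us] //= [->].
- have := same p2; rewrite -lab1; case E2: (phi q p2) => [[d'|z'] us2] //= [ez].
  have z_p1 : z.2 = p1 by apply: (phi_leaf_state q_ax); rewrite E1; left.
  have z_p2 : z.2 = p2 by apply: (phi_leaf_state q_ax); rewrite E2 ez; left.
  by move: p12; rewrite -z_p1 -z_p2 eqxx.
Qed.
End Aheadness.

Theorem mainTheorem7 (Sig Del : finType) (rkS : Sig -> nat) (rkD : Del -> nat)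
  (M N : dtla Sig Del)
  (wfM : wf_dtla rkS rkD M) (wfN : wf_dtla rkS rkD N)
  (rhoM : Qs M -> Ps M) (rhoN : Qs N -> Ps N)
  (canM : canonical rkS M rhoM) (canN : canonical rkS N rhoN)
  (eqMN : equivalent rkS M N)
  (hM : is_dtpla M) (hN : is_dtop N) (bot : Ps N)
  (phi : Qs N -> Ps M -> otree (Del + (Qs M * Ps M)))
  (hphi : is_aheadness rkS M N bot phi) :
  is_glb (fun t => exists p : Ps M, t = embB (Omega M rhoM (axm M p)))
         (Phi (axm N bot))
  /\
  (forall (v : seq nat) (q : Qs N) (p : Ps M),
     all (fun i => 0 < i) v ->
     subt (axm N bot) v = Some (leaf (inr q)) ->
     Some (phi q p) = subt (Omega M rhoM (axm M p)) v).
Proof.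
have [_ [luM _]] := canM; have [totN [_ [earlyN _]]] := canN.
have axiomM := axiom_Omega luM hphi.
have [p0 _] := card_gt1P hM.
split; [split|].
- by move=> _ [p ->]; rewrite axiomM; apply: tle_Phi_embB.
- move=> l lowb; apply: (Phi_greatest p0 (F := phi)) => [q q_ax | p].
    exact: phi_label_varies luM hphi totN hN eqMN earlyN hM q q_ax.
  by rewrite -axiomM; apply: lowb; exists p.
- move=> v q p _ at_q.
  by rewrite axiomM (subt_tsub (phi^~ p) (wfN.1 bot) at_q).
Qed.
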